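(* With $\hat A=T(V)/I$, $\hat q$, and $\hat x_j=x_j+I$ as constructed below, the set consisting of $\hat 1=1+I$, $\hat q$, all products $\hat x_{j_1}\cdots\hat x_{j_m}$ with $m\ge1$ and $(j_1,\dots,j_m)\in J^m$, and all products $\hat x_{j_1}\cdots\hat x_{j_t}\,\hat q\,\hat x_{j_{t+1}}\cdots\hat x_{j_m}$ with $m\ge1$, $0\le t\le m$, $(j_1,\dots,j_m)\in J^m$, is a $\mathbf{k}$-basis of $\hat A$ (these elements being pairwise distinct for distinct index data).
   Context: Let $X=\{x_j:j\in J\}$ be a set, $\tilde q\notin X$ a symbol, $V$ the $\mathbf{k}$-vector space with basis $X\cup\{\tilde q\}$, $T(V)$ its tensor algebra, $I$ the two-sided ideal of $T(V)$ generated by $\tilde q\otimes\tilde q-\tilde q$ and all $\tilde q\otimes a\otimes\tilde q-\tilde q\otimes a$ for $a\in T(V)$; $\hat A=T(V)/I$, $\hat q=\tilde q+I$, $\hat x_j=x_j+I$. *)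

(* The tensor algebra T(V) over the field k, V with basis
   X ∪ {q~}, is modelled as the free associative algebra on the alphabet
   option J (None = q~, Some j = x_j): an element is a coefficient function
   on words, with finite support. *)
From HB Require Import structures.
From mathcomp Require Import all_boot all_order all_algebra.
From Stdlib Require List ClassicalEpsilon.
Set Implicit Arguments. Unset Strict Implicit. Unset Printing Implicit Defensive.
Import GRing.Theory.
Local Open Scope ring_scope.

Section TensorAlgebra.
Variables (k : fieldType) (J : Type).

Definition word := seq (option J).
Definition tensor := word -> k.

Definition fin_supp (f : tensor) : Prop :=
  exists s : seq word, forall w, f w <> 0 -> List.In w s.

Definition tmul (f g : tensor) : tensor :=
  fun w => \sum_(i < (size w).+1) f (take i w) * g (drop i w).

Definition mono (u : word) : tensor :=
  fun w => if ClassicalEpsilon.excluded_middle_informative (w = u) then 1 else 0.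

Definition tone : tensor := mono [::].
Definition tq : tensor := mono [:: None].

Definition genI (g : tensor) : Prop :=
  (forall w, g w = tmul tq tq w - tq w) \/
  exists a, fin_supp a /\
    forall w, g w = tmul (tmul tq a) tq w - tmul tq a w.

Definition inI (f : tensor) : Prop :=
  exists l : seq (tensor * tensor * tensor),
    (forall t, List.In t l -> [/\ fin_supp t.1.1, genI t.1.2 & fin_supp t.2]) /\
    forall w, f w = \sum_(t <- l) tmul (tmul t.1.1 t.1.2) t.2 w.

Inductive bindex :=
| bOne
| bQ
| bX of seq J
| bXQ of seq J & nat.

Definition bvalid (i : bindex) : Prop :=
  match i with
  | bOne | bQ => True
  | bX s => (0 < size s)%N
  | bXQ s t => (0 < size s)%N /\ (t <= size s)%N
  end.

Definition bword (i : bindex) : word :=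
  match i with
  | bOne => [::]
  | bQ => [:: None]
  | bX s => map Some s
  | bXQ s t => map Some (take t s) ++ None :: map Some (drop t s)
  end.

Definition lincomb (l : seq (k * bindex)) : tensor :=
  fun w => \sum_(p <- l) p.1 * mono (bword p.2) w.

End TensorAlgebra.

From Pilot Require Import Defs.
From HB Require Import structures.
From mathcomp Require Import all_boot all_order all_algebra.
From mathcomp Require Import zify.
From Stdlib Require List Classical ClassicalEpsilon FunctionalExtensionality.
Set Implicit Arguments. Unset Strict Implicit. Unset Printing Implicit Defensive.
Import GRing.Theory.
Local Open Scope ring_scope.

(* The rewriting rule
        x q y q z  ~>  x q y z            (x, y, z arbitrary words)
   is a monomial instance of a generator q a q - q a of I multiplied on both
   sides by monomials; conversely every element of I is a finite linear
   combination of such rule differences ("rule combinations").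
   Erasing every q after the first one gives the normal form [nf u] of a word
   u.  It is invariant under the rule, and the normal words are exactly the
   words [bword i] of the claimed basis.
   - Spanning: every monomial is congruent modulo I to the monomial of its
     normal form, by iterating the rule.
   - Independence: for a normal word r, the functional "sum of the
     coefficients of all words with normal form r" kills every rule difference,
     hence kills I; on a combination of basis monomials it returns the
     coefficient of r.
   - Distinctness of the classes is independence for the combination i - j. *)

Section Monomials.
Variables (k : fieldType) (J : Type).
Notation tensor := (tensor k J).
Notation word := (word J).
Notation mono := (@mono k J).

(* Classical boolean equality of words (J carries no decidable equality). *)
Definition weq (x y : word) : bool :=
  if ClassicalEpsilon.excluded_middle_informative (x = y) then true else false.

Lemma weqP (x y : word) : reflect (x = y) (weq x y).
Proof. by rewrite /weq; case: ClassicalEpsilon.excluded_middle_informative; constructor. Qed.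

Lemma weqC (x y : word) : weq x y = weq y x.
Proof. by apply/weqP/weqP => ->. Qed.

Lemma monoE (u w : word) : mono u w = if weq w u then 1 else 0.
Proof. by rewrite /Defs.mono /weq; case: ClassicalEpsilon.excluded_middle_informative. Qed.

Lemma mono_id (u : word) : mono u u = 1.
Proof. by rewrite monoE; case: weqP. Qed.

Lemma mono_neq (u w : word) : w <> u -> mono u w = 0.
Proof. by rewrite monoE; case: weqP. Qed.

Lemma fin_supp_mono (u : word) : fin_supp (mono u).
Proof. by exists [:: u] => w; rewrite monoE; case: weqP => [->|]; [left|]. Qed.

Lemma tmul_mono (u v w : word) : tmul (mono u) (mono v) w = mono (u ++ v) w.
Proof.
rewrite /tmul; case: (weqP w (u ++ v)) => [->|Hne].
  have Hlt : (size u < (size (u ++ v)).+1)%N by rewrite size_cat ltnS leq_addr.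
  rewrite (bigD1 (Ordinal Hlt)) //= take_size_cat // drop_size_cat // !mono_id mulr1.
  rewrite big1 ?addr0 // => i Hi; rewrite mono_neq ?mul0r // => Ht.
  have : size (take i (u ++ v)) = size u by rewrite Ht.
  rewrite size_takel; last by rewrite -ltnS.
  by move=> Hs; move: Hi; rewrite -(inj_eq val_inj) /= Hs eqxx.
rewrite mono_neq // big1 // => i _; rewrite !monoE.
case: weqP => [Ht|]; last by rewrite mul0r.
case: weqP => [Hd|]; last by rewrite mulr0.
by case: Hne; rewrite -Ht -Hd cat_take_drop.
Qed.

Lemma tmulBl (f g h : tensor) w :
  tmul (fun x => f x - g x) h w = tmul f h w - tmul g h w.
Proof. by rewrite /tmul -sumrB; apply: eq_bigr => i _; rewrite mulrBl. Qed.

Lemma tmulBr (f g h : tensor) w :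
  tmul h (fun x => f x - g x) w = tmul h f w - tmul h g w.
Proof. by rewrite /tmul -sumrB; apply: eq_bigr => i _; rewrite mulrBr. Qed.

Lemma tmulZl c (f h : tensor) w : tmul (fun x => c * f x) h w = c * tmul f h w.
Proof. by rewrite /tmul mulr_sumr; apply: eq_bigr => i _; rewrite mulrA. Qed.

Lemma tmulZr c (f h : tensor) w : tmul h (fun x => c * f x) w = c * tmul h f w.
Proof. by rewrite /tmul mulr_sumr; apply: eq_bigr => i _; rewrite mulrCA. Qed.

Lemma tmul_suml I (r : seq I) (F : I -> tensor) h w :
  tmul (fun x => \sum_(i <- r) F i x) h w = \sum_(i <- r) tmul (F i) h w.
Proof.
rewrite /tmul -exchange_big; apply: eq_bigr => j _; exact: mulr_suml.
Qed.

Lemma tmul_sumr I (r : seq I) (F : I -> tensor) h w :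
  tmul h (fun x => \sum_(i <- r) F i x) w = \sum_(i <- r) tmul h (F i) w.
Proof.
rewrite /tmul -exchange_big; apply: eq_bigr => j _; exact: mulr_sumr.
Qed.

Lemma sum_mono_nodup (s : seq word) (c : word -> k) w : List.NoDup s ->
  (List.In w s -> \sum_(u <- s) c u * mono u w = c w) /\
  (~ List.In w s -> \sum_(u <- s) c u * mono u w = 0).
Proof.
elim: s => [|a s IH] Hn; first by split=> // _; rewrite big_nil.
inversion Hn as [|a' s' Hna Hns]; subst.
have [IHin IHout] := IH Hns; rewrite big_cons; split.
  case=> [Ea|Hin]; first by subst; rewrite mono_id mulr1 IHout ?addr0.
  by rewrite IHin // mono_neq ?mulr0 ?add0r // => E; apply: Hna; rewrite -E.
move=> Hout; rewrite IHout ?addr0; last by move=> H; apply: Hout; right.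
by rewrite mono_neq ?mulr0 // => E; apply: Hout; left.
Qed.

Lemma fin_supp_expand (f : tensor) : fin_supp f ->
  exists s : seq word, f = fun w => \sum_(u <- s) f u * mono u w.
Proof.
move=> [s Hs]; pose wdec x y := ClassicalEpsilon.excluded_middle_informative (x = y :> word).
exists (List.nodup wdec s).
apply: FunctionalExtensionality.functional_extensionality => w.
have [Hin Hout] := sum_mono_nodup f w (List.NoDup_nodup wdec s).
case: (Classical_Prop.classic (List.In w (List.nodup wdec s))) => Hw; first by rewrite Hin.
rewrite Hout //; apply: Classical_Prop.NNPP => Hf; apply: Hw.
by apply/List.nodup_In; apply: Hs.
Qed.

End Monomials.

Section Spanning.
Variables (k : fieldType) (J : Type).
Notation tensor := (tensor k J).
Notation word := (word J).
Notation mono := (@mono k J).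

Lemma tmul_monoF (u v : word) : tmul (mono u) (mono v) = mono (u ++ v).
Proof. by apply: FunctionalExtensionality.functional_extensionality => w; apply: tmul_mono. Qed.

Lemma inI_ext (f g : tensor) : inI f -> (forall w, f w = g w) -> inI g.
Proof. by move=> [l [Hl E]] Efg; exists l; split=> // w; rewrite -Efg. Qed.

Lemma inI0 : inI (fun _ : word => 0 : k).
Proof. by exists [::]; split=> // w; rewrite big_nil. Qed.

Lemma inI_add (f g : tensor) : inI f -> inI g -> inI (fun w => f w + g w).
Proof.
move=> [l1 [H1 E1]] [l2 [H2 E2]]; exists (l1 ++ l2); split.
  by move=> t Ht; case: (List.in_app_or _ _ _ Ht) => ?; [apply: H1|apply: H2].
by move=> w; rewrite big_cat E1 E2.
Qed.

Lemma inI_scale c (f : tensor) : inI f -> inI (fun w => c * f w).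
Proof.
move=> [l [Hl E]]; exists [seq ((fun w => c * t.1.1 w, t.1.2), t.2) | t <- l]; split.
  move=> t Ht; have [t0 [<- Ht0]] := proj1 (List.in_map_iff _ _ _) Ht.
  have [[s Hs] Hg Hb] := Hl t0 Ht0; split=> //=.
  by exists s => w Hw; apply: Hs => H0; apply: Hw; rewrite H0 mulr0.
move=> w; rewrite E big_map mulr_sumr; apply: eq_bigr => t _ /=.
have -> : tmul (fun x => c * t.1.1 x) t.1.2 = fun x => c * tmul t.1.1 t.1.2 x.
  by apply: FunctionalExtensionality.functional_extensionality => x; apply: tmulZl.
by rewrite tmulZl.
Qed.

Definition congI (f g : tensor) : Prop := inI (fun w => f w - g w).

Lemma congI_refl (f : tensor) : congI f f.
Proof. by apply: inI_ext inI0 _ => w; rewrite subrr. Qed.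

Lemma congI_trans (f g h : tensor) : congI f g -> congI g h -> congI f h.
Proof. by move=> Hfg Hgh; apply: inI_ext (inI_add Hfg Hgh) _ => w; rewrite addrA subrK. Qed.

Lemma congI_axpy c (f1 g1 f2 g2 : tensor) : congI f1 g1 -> congI f2 g2 ->
  congI (fun w => c * f1 w + f2 w) (fun w => c * g1 w + g2 w).
Proof.
move=> H1 H2; apply: inI_ext (inI_add (inI_scale c H1) H2) _ => w.
by rewrite mulrBr opprD addrACA.
Qed.

(* The rewriting rule  x q y q z ~> x q y z  holds modulo I: the difference is
   x (q y q - q y) z, a generator of I multiplied by monomials. *)
Lemma rule_congI (x y z : word) :
  congI (mono (x ++ None :: y ++ None :: z)) (mono (x ++ None :: y ++ z)).
Proof.
pose g : tensor := fun w => tmul (tmul (@tq k J) (mono y)) (@tq k J) w - tmul (@tq k J) (mono y) w.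
have Eg : g = fun w => mono (None :: y ++ [:: None]) w - mono (None :: y) w.
  by rewrite /g /tq !tmul_monoF.
exists [:: (mono x, g, mono z)]; split.
  move=> t [<-|//]; split; try exact: fin_supp_mono.
  by right; exists (mono y); split=> //; apply: fin_supp_mono.
move=> w; rewrite big_cons big_nil addr0 /=.
have -> : tmul (mono x) g = fun v => mono (x ++ None :: y ++ [:: None]) v - mono (x ++ None :: y) v.
  apply: FunctionalExtensionality.functional_extensionality => v.
  by rewrite Eg tmulBr !tmul_mono.
by rewrite tmulBl !tmul_mono -!catA /= -!catA.
Qed.

Definition isx (o : option J) : bool := if o is Some _ then true else false.
Definition eraseq (u : word) : word := filter isx u.
Fixpoint nf (u : word) : word :=
  match u with
  | [::] => [::]
  | Some j :: u' => Some j :: nf u'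
  | None :: u' => None :: eraseq u'
  end.

Lemma nf_rule (x y z : word) :
  nf (x ++ None :: y ++ None :: z) = nf (x ++ None :: y ++ z).
Proof.
elim: x => [|[j|] x IH] /=; last by rewrite /eraseq !filter_cat /= !filter_cat.
- by rewrite /eraseq !filter_cat.
- by rewrite IH.
Qed.

Lemma congI_eraseq (x y v : word) :
  congI (mono (x ++ None :: y ++ v)) (mono (x ++ None :: y ++ eraseq v)).
Proof.
elim: v y => [|[j|] v IH] y /=; first exact: congI_refl.
  by have := IH (y ++ [:: Some j]); rewrite -!catA.
exact: congI_trans (rule_congI x y v) (IH y).
Qed.

Lemma congI_nf (x u : word) : congI (mono (x ++ u)) (mono (x ++ nf u)).
Proof.
elim: u x => [|[j|] u IH] x /=; first exact: congI_refl.
  by have := IH (x ++ [:: Some j]); rewrite -!catA.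
exact: (congI_eraseq x [::] u).
Qed.

Lemma eraseq_pmap (u : word) : eraseq u = map Some (pmap id u).
Proof. by elim: u => //= [[a|] u] /= ->. Qed.

Lemma nf_basis_word (u : word) : exists i, bvalid i /\ bword i = nf u.
Proof.
elim: u => [|[j|] u [i [Hv Hi]]] /=.
- by exists (bOne J).
- rewrite -Hi; case: i Hv {Hi} => [|| s | s t] /= Hv.
  + by exists (bX [:: j]).
  + by exists (bXQ [:: j] 1).
  + by exists (bX (j :: s)).
  + by exists (bXQ (j :: s) t.+1); case: Hv.
- rewrite eraseq_pmap; case: (pmap id u) => [|a s].
  + by exists (bQ J).
  + by exists (bXQ (a :: s) 0).
Qed.

Lemma span_combination (s : seq word) (c : word -> k) : exists l : seq (k * bindex J),
  (forall p, List.In p l -> bvalid p.2) /\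
  congI (fun w => \sum_(u <- s) c u * mono u w) (lincomb l).
Proof.
elim: s => [|u s [l [Hl HI]]].
  by exists [::]; split=> //; apply: inI_ext inI0 _ => w; rewrite /lincomb !big_nil subrr.
have [i [Hv Hi]] := nf_basis_word u.
exists ((c u, i) :: l); split; first by move=> p [<-|Hp] //; apply: Hl.
apply: inI_ext (congI_axpy (c u) (congI_nf [::] u) HI) _ => w /=.
by rewrite /lincomb !big_cons /= Hi.
Qed.

End Spanning.

Section Independence.
Variables (k : fieldType) (J : Type).
Notation tensor := (tensor k J).
Notation word := (word J).
Notation mono := (@mono k J).

Definition rule : Type := (word * word * word)%type.
Definition ruleL (r : rule) : word := r.1.1 ++ None :: r.1.2 ++ None :: r.2.
Definition ruleR (r : rule) : word := r.1.1 ++ None :: r.1.2 ++ r.2.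

Definition rterm (m : k * rule) : tensor :=
  fun w => m.1 * (mono (ruleL m.2) w - mono (ruleR m.2) w).
Definition rcomb (M : seq (k * rule)) : tensor := fun w => \sum_(m <- M) rterm m w.
Definition is_rcomb (f : tensor) : Prop := exists M, forall w, f w = rcomb M w.

Lemma is_rcomb_add (f g : tensor) : is_rcomb f -> is_rcomb g -> is_rcomb (fun w => f w + g w).
Proof. by move=> [M1 E1] [M2 E2]; exists (M1 ++ M2) => w; rewrite /rcomb big_cat E1 E2. Qed.

Lemma rcomb_scale c M w : rcomb [seq (c * m.1, m.2) | m <- M] w = c * rcomb M w.
Proof. by rewrite /rcomb big_map mulr_sumr; apply: eq_bigr => m _; rewrite /rterm mulrA. Qed.

Lemma is_rcomb_lin I (s : seq I) (c : I -> k) (Mf : I -> seq (k * rule)) :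
  is_rcomb (fun w => \sum_(i <- s) c i * rcomb (Mf i) w).
Proof.
elim: s => [|i s [M E]]; first by exists [::] => w; rewrite /rcomb !big_nil.
exists ([seq (c i * m.1, m.2) | m <- Mf i] ++ M) => w.
by rewrite big_cons E -rcomb_scale /rcomb big_cat.
Qed.

Lemma tmul_mono_rcomb u M w : tmul (mono u) (rcomb M) w =
  rcomb [seq (m.1, (u ++ m.2.1.1, m.2.1.2, m.2.2)) | m <- M] w.
Proof.
rewrite /rcomb (tmul_sumr M rterm) big_map; apply: eq_bigr => m _.
by rewrite /rterm tmulZr tmulBr !tmul_mono /ruleL /ruleR /= !catA.
Qed.

Lemma tmul_rcomb_mono u M w : tmul (rcomb M) (mono u) w =
  rcomb [seq (m.1, (m.2.1.1, m.2.1.2, m.2.2 ++ u)) | m <- M] w.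
Proof.
rewrite /rcomb (tmul_suml M rterm) big_map; apply: eq_bigr => m _.
by rewrite /rterm tmulZl tmulBl !tmul_mono /ruleL /ruleR /= -!catA /= -!catA.
Qed.

Lemma is_rcomb_mull (a g : tensor) : fin_supp a -> is_rcomb g -> is_rcomb (tmul a g).
Proof.
move=> /fin_supp_expand [s ->] [M E].
have -> : g = rcomb M by apply: FunctionalExtensionality.functional_extensionality.
have [M' E'] := is_rcomb_lin s a
  (fun u => [seq (m.1, (u ++ m.2.1.1, m.2.1.2, m.2.2)) | m <- M]).
exists M' => w; rewrite -E' (tmul_suml s (fun u x => a u * mono u x)).
by apply: eq_bigr => u _; rewrite tmulZl tmul_mono_rcomb.
Qed.

Lemma is_rcomb_mulr (a g : tensor) : fin_supp a -> is_rcomb g -> is_rcomb (tmul g a).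
Proof.
move=> /fin_supp_expand [s ->] [M E].
have -> : g = rcomb M by apply: FunctionalExtensionality.functional_extensionality.
have [M' E'] := is_rcomb_lin s a
  (fun u => [seq (m.1, (m.2.1.1, m.2.1.2, m.2.2 ++ u)) | m <- M]).
exists M' => w; rewrite -E' (tmul_sumr s (fun u x => a u * mono u x)).
by apply: eq_bigr => u _; rewrite tmulZr tmul_rcomb_mono.
Qed.

(* Each generator of I is a rule combination: q q - q is the rule with
   x = y = z = [::], and q a q - q a expands along the monomials of a. *)
Lemma is_rcomb_gen (g : tensor) : genI g -> is_rcomb g.
Proof.
case=> [E|[a [/fin_supp_expand [s Es] E]]].
  exists [:: (1, ([::], [::], [::]))] => w.
  by rewrite E /rcomb big_cons big_nil addr0 /rterm mul1r /tq tmul_mono.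
have Eqa : tmul (@tq k J) a = fun w => \sum_(u <- s) a u * mono (None :: u) w.
  apply: FunctionalExtensionality.functional_extensionality => w.
  rewrite {1}Es (tmul_sumr s (fun u x => a u * mono u x)); apply: eq_bigr => u _.
  by rewrite tmulZr /tq tmul_mono.
exists [seq (a u, ([::], u, [::])) | u <- s] => w.
rewrite E Eqa (tmul_suml s (fun u x => a u * mono (None :: u) x)) /rcomb big_map -sumrB.
apply: eq_bigr => u _; rewrite tmulZl /tq tmul_mono /rterm /ruleL /ruleR /= cats0.
by rewrite mulrBr.
Qed.

Lemma is_rcomb_inI (f : tensor) : inI f -> is_rcomb f.
Proof.
move=> [l [Hl E]].
suff [M EM] : is_rcomb (fun w => \sum_(t <- l) tmul (tmul t.1.1 t.1.2) t.2 w).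
  by exists M => w; rewrite E EM.
elim: l Hl {E} => [|t l IH] Hl; first by exists [::] => w; rewrite /rcomb !big_nil.
have [Ha Hg Hb] := Hl t (or_introl erefl).
have [M EM] := is_rcomb_add (is_rcomb_mulr Hb (is_rcomb_mull Ha (is_rcomb_gen Hg)))
  (IH (fun t' H => Hl t' (or_intror H))).
by exists M => w; rewrite big_cons EM.
Qed.

Definition comb (L : seq (k * word)) : tensor := fun w => \sum_(p <- L) p.1 * mono p.2 w.

Lemma sum_split_word (L : seq (k * word)) (G : k * word -> k) u :
  \sum_(p <- L) G p = \sum_(p <- L) (if weq p.2 u then G p else 0)
                    + \sum_(p <- filter (fun p => ~~ weq p.2 u) L) G p.
Proof.
rewrite big_filter [X in _ + X]big_mkcond -big_split; apply: eq_bigr => p _ /=.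
by case: weq; rewrite ?addr0 ?add0r.
Qed.

Lemma sum_at_word (L : seq (k * word)) (F : word -> k) u :
  \sum_(p <- L) (if weq p.2 u then p.1 * F p.2 else 0) =
  (\sum_(p <- L) if weq p.2 u then p.1 else 0) * F u.
Proof. by rewrite mulr_suml; apply: eq_bigr => p _; case: weqP => [->|]; rewrite ?mul0r. Qed.

(* If a formal combination denotes the zero tensor, the coefficients of each
   word add up to zero, so every weighting h of the words annihilates it. *)
Lemma comb_eq0_weighted (L : seq (k * word)) (h : word -> k) :
  (forall w, comb L w = 0) -> \sum_(p <- L) p.1 * h p.2 = 0.
Proof.
move: {2}(size L) (leqnn (size L)) => n; elim: n L => [|n IH] [|[c u] L'] //= HL Hz;
  rewrite ?big_nil //.
set L := (c, u) :: L' in Hz *; set R := filter (fun p => ~~ weq p.2 u) L.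
have coef_u : \sum_(p <- L) (if weq p.2 u then p.1 else 0) = 0.
  transitivity (comb L u); last exact: Hz.
  by apply: eq_bigr => p _; rewrite monoE weqC; case: weq; rewrite ?mulr1 ?mulr0.
have sizeR : (size R <= n)%N.
  by rewrite /R /L /= (introT (weqP u u) erefl) size_filter (leq_trans (count_size _ _)).
have HR : forall w, comb R w = 0.
  move=> w; have := Hz w; rewrite /comb (sum_split_word _ _ u).
  by rewrite (sum_at_word L (fun v => mono v w)) coef_u mul0r add0r.
by rewrite (sum_split_word _ _ u) (IH R sizeR HR) sum_at_word coef_u mul0r addr0.
Qed.

Definition rwords (M : seq (k * rule)) : seq (k * word) :=
  flatten [seq [:: (- m.1, ruleL m.2); (m.1, ruleR m.2)] | m <- M].

Lemma comb_rwords M w : comb (rwords M) w = - rcomb M w.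
Proof.
rewrite /comb /rcomb big_flatten big_map -sumrN; apply: eq_bigr => m _.
by rewrite !big_cons big_nil /rterm /= addr0 mulNr mulrBr opprB addrC.
Qed.

Lemma rwords_weighted M (h : word -> k) : (forall r, h (ruleL r) = h (ruleR r)) ->
  \sum_(p <- rwords M) p.1 * h p.2 = 0.
Proof.
move=> Hh; rewrite big_flatten big_map big1 // => m _.
by rewrite !big_cons big_nil /= Hh mulNr addr0 addNr.
Qed.

Lemma nf_map (s : seq J) : nf (map Some s) = map Some s.
Proof. by elim: s => //= a s ->. Qed.

Lemma eraseq_map (s : seq J) : eraseq (map Some s) = map Some s.
Proof. by elim: s => //= a s ->. Qed.

Lemma nf_bword (i : bindex J) : nf (bword i) = bword i.
Proof.
case: i => [||s|s t] //=; first exact: nf_map.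
by elim: (take t s) => [|a s' IH] /=; [rewrite eraseq_map | rewrite IH].
Qed.

Lemma pmap_map (s : seq J) : pmap id (map Some s) = s.
Proof. by elim: s => //= a s ->. Qed.

Lemma has_q_map (s : seq J) : has (predC (@isx J)) (map Some s) = false.
Proof. by elim: s. Qed.

Lemma find_q (a b : seq J) : find (predC (@isx J)) (map Some a ++ None :: map Some b) = size a.
Proof. by elim: a => //= x a ->. Qed.

Lemma bword_inj (i j : bindex J) : bvalid i -> bvalid j -> bword i = bword j -> i = j.
Proof.
case: i => [||s|s t]; case: j => [||s' |s' t'] //= Hi Hj E.
all: repeat match goal with H : _ /\ _ |- _ => destruct H end.
all: try by move/(congr1 (has (predC (@isx J)))): E; rewrite /= ?has_cat /= ?has_q_map.
all: try by move/(congr1 size): E; rewrite /= ?size_cat /= ?size_map ?size_takel ?size_drop //; lia.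
- by rewrite (inj_map (@Some_inj _) E).
- have E1 := congr1 (pmap id) E; rewrite !pmap_cat /= !pmap_map !cat_take_drop in E1.
  subst s'; have E2 := congr1 (find (predC (@isx J))) E; rewrite !find_q !size_takel in E2 => //.
  by rewrite E2.
Qed.

Definition nf_class (r v : word) : k := if weq (nf v) r then 1 else 0.

Lemma sum_eq0_in I (l : seq I) (F : I -> k) :
  (forall q, List.In q l -> F q = 0) -> \sum_(q <- l) F q = 0.
Proof.
elim: l => [|a l IH] H; first by rewrite big_nil.
by rewrite big_cons H ?IH ?addr0 //; [move=> q Hq; apply: H; right | left].
Qed.

Lemma basis_coef (l : seq (k * bindex J)) p :
  (forall q, List.In q l -> bvalid q.2) -> List.NoDup (map snd l) -> List.In p l ->
  \sum_(q <- l) q.1 * nf_class (bword p.2) (bword q.2) = p.1.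
Proof.
rewrite /nf_class; elim: l => [//|q0 l IH] Hv Hn Hp.
inversion Hn as [|a b Hq0 Hn']; subst.
have Hv' : forall q, List.In q l -> bvalid q.2 by move=> q Hq; apply: Hv; right.
have Hv0 := Hv q0 (or_introl erefl).
rewrite big_cons nf_bword; case: Hp => [<-|Hp].
  rewrite (introT (weqP _ _) erefl) mulr1 sum_eq0_in ?addr0 // => q Hq.
  rewrite nf_bword; case: weqP => [E|]; last by rewrite mulr0.
  by case: Hq0; rewrite -(bword_inj (Hv' q Hq) Hv0 E); apply: List.in_map.
rewrite IH //; case: weqP => [E|_]; last by rewrite mulr0 add0r.
by case: Hq0; rewrite (bword_inj Hv0 (Hv' p Hp) E); apply: List.in_map.
Qed.

Lemma basis_independent (l : seq (k * bindex J)) :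
  (forall p, List.In p l -> bvalid p.2) -> List.NoDup (map snd l) ->
  inI (lincomb l) -> forall p, List.In p l -> p.1 = 0.
Proof.
move=> Hv Hn /is_rcomb_inI [M EM] p Hp.
pose L := [seq (q.1, bword q.2) | q <- l] ++ rwords M.
have L0 : forall w, comb L w = 0.
  move=> w; transitivity (lincomb l w - rcomb M w); last by rewrite EM subrr.
  by rewrite /comb big_cat big_map; congr (_ + _); apply: comb_rwords.
have Hh : forall r, nf_class (bword p.2) (ruleL r) = nf_class (bword p.2) (ruleR r).
  by move=> r; rewrite /nf_class /ruleL nf_rule.
have := comb_eq0_weighted (nf_class (bword p.2)) L0.
by rewrite big_cat big_map (rwords_weighted _ Hh) /= addr0 basis_coef.
Qed.

End Independence.

Theorem proposition3p2 (k : fieldType) (J : Type) :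
  (* spanning: every element of T(V) is congruent mod I to a combination *)
  (forall f : tensor k J, fin_supp f ->
     exists l : seq (k * bindex J),
       (forall p, List.In p l -> bvalid p.2) /\
       inI (fun w => f w - lincomb l w)) /\
  (* linear independence of the classes modulo I *)
  (forall l : seq (k * bindex J),
     (forall p, List.In p l -> bvalid p.2) ->
     List.NoDup (map snd l) ->
     inI (lincomb l) ->
     forall p, List.In p l -> p.1 = 0) /\
  (* the classes are pairwise distinct for distinct index data *)
  (forall i j : bindex J, bvalid i -> bvalid j -> i <> j ->
     ~ inI (fun w => mono k (bword i) w - mono k (bword j) w)).
Proof.
split; [|split].
- move=> f /fin_supp_expand [s Es].
  have [l [Hl HI]] := span_combination s f; exists l; split=> //.
  by rewrite {1}Es.
- exact: basis_independent.
- move=> i j Hi Hj Hij HI.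
  pose l := [:: (1 : k, i); (-1, j)].
  have Hv : forall p, List.In p l -> bvalid p.2 by move=> p [<-|[<-|[]]].
  have Hn : List.NoDup (map snd l).
    constructor; last by constructor; [case | constructor].
    by case=> [E|[]]; apply: Hij.
  have Hl : inI (lincomb l).
    by apply: inI_ext HI _ => w; rewrite /lincomb !big_cons big_nil /= mul1r mulN1r addr0.
  by move/eqP: (basis_independent Hv Hn Hl (or_introl erefl)); rewrite oner_eq0.
Qed.
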